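(* With the notation of the context, the semigroup $U$ is generated by elements $u\in U$ satisfying $\varphi_u(e)\le 2$ for all $e\in E$. Consequently, under the isomorphism $k[\mathrm{Rep}_{Q,c}(\beta,r)]^{\mathrm{SL}(\beta)}\cong k[U][y_b]_{b\in B}$, the ring of semi-invariants is generated by the monomials corresponding to such $u$ together with the variables $y_b$ (i.e. generators occur in multidegrees with $\varphi_u(e)\le 2$ for all endpoints $e$ and with each band variable of degree at most $1$).
   Context: $k$ algebraically closed; $Q$ acyclic quiver with coloring $c:Q_1\to S$ (each $c^{-1}(s)$ the arrow set of a directed path) such that $kQ/I_c$ is a gentle string algebra ($I_c$ generated by all $ba$ with $ha=tb$, $c(a)=c(b)$). $\beta$ a dimension vector; $\mathfrak{X}$ the set of $(x,s)\in Q_0\times S$ such that an arrow of color $s$ has head or tail $x$; $i(x,s)$, $o(x,s)$ the arrow of color $s$ with head, resp. tail, $x$ (or $\emptyset$). A vertex is lonely if it lies in exactly one pair of $\mathfrak{X}$, coupled if in two. $r$ is a maximal rank sequence: $r:Q_1\to\mathbb{N}$, $r(i(x,s))+r(o(x,s))\le\beta_x$ for all $(x,s)\in\mathfrak{X}$ ($r(\emptyset)=0$), maximal coordinatewise. $\mathrm{Rep}_{Q,c}(\beta,r)$: representations of $kQ/I_c$ of dimension $\beta$ with $\operatorname{rank}V_a\le r(a)$. Partition equivalence graph: vertex set $\Sigma=\{\alpha_i^{(x,s)}:(x,s)\in\mathfrak{X},1\le i\le\beta_x-1\}$, edges (i) $\alpha_i^{(x,s_1)}$—$\alpha_{\beta_x-i}^{(x,s_2)}$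 for coupled $x$ with pairs $(x,s_1),(x,s_2)$, $1\le i\le\beta_x-1$; (ii) $\alpha_i^{(x,s)}$—$\alpha_{\beta_y-i}^{(y,s)}$ for each arrow $a:x\to y$ of color $s$, $1\le i\le r(a)-1$. Path components with at least one edge are strings, cycle components are bands ($B$ = set of bands); $E$ is the set of string endpoints and $\Theta:E\to E$ swaps the endpoints of each string. For $u:Q_1\to\mathbb{N}$ ($u(\emptyset)=0$), $\varphi_u(\alpha_i^{(x,s)})=0$ if $x$ lonely, and $=[i=r(o(x,s))]u(o(x,s))+[i=\beta_x-r(i(x,s))]u(i(x,s))$ if $x$ coupled. $U=\{u:Q_1\to\mathbb{N}:\varphi_u(e)=\varphi_u(\Theta e)\ \forall e\in E\}$. The paper proves $k[\mathrm{Rep}_{Q,c}(\beta,r)]^{\mathrm{SL}(\beta)}\cong k[U][y_b]_{b\in B}$ (polynomial ring in one variable per band over $k[U]$). *)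

From mathcomp Require Import all_boot.
Set Implicit Arguments. Unset Strict Implicit. Unset Printing Implicit Defensive.

Section ColoredQuiver.
Variables (V A S : finType) (src tgt : A -> V) (col : A -> S).

Definition qpath (p : seq A) : bool :=
  if p is a :: p' then path (fun a b => tgt a == src b) a p' else true.

Definition acyclic : Prop :=
  forall (a : A) (p : seq A), qpath (a :: p) -> src a != tgt (last a p).

Definition color_paths : Prop :=
  forall s : S, exists p : seq A,
    [&& qpath p, uniq p & [forall a, (a \in p) == (col a == s)]].

(* kQ/I_c is gentle, where I_c is generated by the paths ba (tgt a = src b)
   with col a = col b *)
Definition gentle : Prop :=
  (forall x : V, #|[pred a | tgt a == x]| <= 2 /\ #|[pred a | src a == x]| <= 2) /\
  (forall a : A,
     #|[pred b | (src b == tgt a) && (col b == col a)]| <= 1 /\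
     #|[pred b | (src b == tgt a) && (col b != col a)]| <= 1) /\
  (forall b : A,
     #|[pred a | (tgt a == src b) && (col a == col b)]| <= 1 /\
     #|[pred a | (tgt a == src b) && (col a != col b)]| <= 1).

Definition inX (x : V) (s : S) : bool :=
  [exists a, (col a == s) && ((tgt a == x) || (src a == x))].

(* i(x,s), o(x,s); None stands for the empty arrow *)
Definition iarr (x : V) (s : S) : option A := [pick a | (tgt a == x) && (col a == s)].
Definition oarr (x : V) (s : S) : option A := [pick a | (src a == x) && (col a == s)].

Definition ov (f : A -> nat) (o : option A) : nat := if o is Some a then f a else 0.

Definition rank_ok (beta : V -> nat) (r : A -> nat) : Prop :=
  forall x s, inX x s -> ov r (iarr x s) + ov r (oarr x s) <= beta x.

Definition max_rank (beta : V -> nat) (r : A -> nat) : Prop :=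
  rank_ok beta r /\
  forall r' : A -> nat, rank_ok beta r' -> (forall a, r a <= r' a) ->
    forall a, r' a = r a.

Definition npairs (x : V) : nat := #|[pred s | inX x s]|.
Definition lonely (x : V) : bool := npairs x == 1.
Definition coupled (x : V) : bool := npairs x == 2.

Variables (beta : V -> nat) (r : A -> nat).

(* vertices alpha_i^{(x,s)} are encoded as triples (x, s, i) *)
Definition inSigma (v : V * S * nat) : bool :=
  let: (x, s, i) := v in [&& inX x s, 1 <= i & i <= beta x - 1].

Definition edge0 (v w : V * S * nat) : bool :=
  let: (x, s, i) := v in let: (y, s', j) := w in
  [&& x == y, s != s', coupled x, inX x s, inX x s', 1 <= i,
      i <= beta x - 1 & j == beta x - i]
  || [exists a, [&& col a == s, s' == s, src a == x, tgt a == y,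
                   1 <= i, i <= r a - 1 & j == beta y - i]].

Definition pedge (v w : V * S * nat) : bool := edge0 v w || edge0 w v.

Definition pconnected (v w : V * S * nat) : Prop :=
  exists p : seq (V * S * nat), path pedge v p && (last v p == w).

(* E: the endpoints of strings, i.e. vertices of Sigma of degree exactly one
   (the graph has maximal degree 2, so these are exactly string endpoints) *)
Definition endpoint (e : V * S * nat) : Prop :=
  inSigma e /\ exists w, pedge e w /\ forall w', pedge e w' -> w' = w.

Definition theta_rel (e e' : V * S * nat) : Prop :=
  endpoint e /\ endpoint e' /\ e != e' /\ pconnected e e'.

Definition phi (u : A -> nat) (v : V * S * nat) : nat :=
  let: (x, s, i) := v in
  if lonely x then 0 else
    (i == ov r (oarr x s)) * ov u (oarr x s)
    + (i == beta x - ov r (iarr x s)) * ov u (iarr x s).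

Definition inU (u : A -> nat) : Prop :=
  forall e e', theta_rel e e' -> phi u e = phi u e'.

End ColoredQuiver.

From Pilot Require Import Defs.
From Stdlib Require List.
From Stdlib Require Import Classical.
From mathcomp Require Import all_boot zify.

Set Implicit Arguments. Unset Strict Implicit. Unset Printing Implicit Defensive.

(* Each arrow [a] contributes [u a] to [phi u] at exactly two points of Sigma,
   its ends [(src a, col a, r a)] and [(tgt a, col a, beta (tgt a) - r a)] (ends at
   lonely vertices contribute nothing).  So [phi u] is the degree function of the
   multigraph on Sigma whose edges are the arrows, taken with multiplicities [u],
   and [u \in U] says that the two endpoints of each string have the same degree.
   Since Sigma has maximal degree two, Theta is a fixed-point-free partial
   involution, and U is the monoid of such balanced weightings.  Every balanced
   weighting is a sum of atoms, and an atom has degree at most 2 at every point z: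
   if some end w of a used arrow is paired with w' and neither is z, an arrow also
   ends at w', and joining the two arrows at w, w' gives an atom of smaller total
   weight with the same degree at z; otherwise all paired ends lie at z and its
   partner z', and a degree above 2 at z allows one to trade weight at z against
   weight at z' to obtain a proper balanced sub-weighting. *)

Lemma sum_option (I : finType) (F : option I -> nat) :
  \sum_o F o = F None + \sum_i F (Some i).
Proof.
rewrite (bigD1 None) //=; congr (_ + _).
rewrite (reindex_omap Some id) //=; last by case.
by apply: eq_bigl => i; rewrite eqxx.
Qed.

Lemma sum_mul_eq (I : finType) (F : I -> nat) (i : I) :
  \sum_k F k * (k == i) = F i.
Proof.
rewrite (bigD1 i) //= eqxx muln1 big1 ?addn0 // => k /negbTE ->.
by rewrite muln0.
Qed.

Lemma sum_eq1 (I : finType) (i : I) : \sum_k nat_of_bool (k == i) = 1.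
Proof. by rewrite -[RHS](sum_mul_eq (fun _ => 1) i); apply: eq_bigr => k _; rewrite mul1n. Qed.

Lemma exists_subweight (I : finType) (P : pred I) (g : I -> nat) t :
  t <= \sum_i P i * g i ->
  exists h : I -> nat,
    [/\ forall i, h i <= g i, forall i, 0 < h i -> P i & \sum_i h i = t].
Proof.
elim: t => [|t IH] le_t.
  by exists (fun=> 0); split=> //; rewrite big1.
have [h [le_hg supp_h sum_h]] := IH (ltnW le_t).
have sum_Ph : \sum_i P i * h i = t.
  rewrite -sum_h; apply: eq_bigr => i _.
  case: (boolP (P i)) => [_|Pi]; rewrite ?mul1n ?mul0n //.
  by apply/esym/eqP; rewrite -leqn0 leqNgt (contra (supp_h i) Pi).
case: (pickP [pred i | P i && (h i < g i)]) => [i /andP[Pi lt_hg]|full].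
  exists (fun k => h k + (k == i)); split.
  - by move=> k; case: eqVneq => [->|_]; rewrite ?addn1 ?addn0.
  - by move=> k; case: eqVneq => [->|_]; rewrite ?addn0 // => /supp_h.
  - by rewrite big_split /= sum_h sum_eq1 addn1.
suff : \sum_i P i * g i <= t by rewrite leqNgt le_t.
rewrite -sum_Ph; apply: leq_sum => i _; have /= := full i.
by case: (P i) => //= /negbT; rewrite -leqNgt !mul1n.
Qed.

(** * Balanced weightings of a multigraph and their atoms *)

Section Balanced.
Variables (T : eqType) (paired : T -> T -> Prop).
Hypothesis paired_sym : forall x y, paired x y -> paired y x.
Hypothesis paired_irrefl : forall x, ~ paired x x.
Hypothesis paired_fun : forall x y y', paired x y -> paired x y' -> y = y'.

Lemma paired_count w w' x y : paired w w' -> paired x y ->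
  (w == x) + (w' == x) = (w == y) + (w' == y).
Proof.
move=> pw pxy; have pyx := paired_sym pxy.
have nww' : (w == w') = false.
  by apply/eqP => eww'; rewrite eww' in pw; exact: paired_irrefl pw.
have nw'w : (w' == w) = false by rewrite eq_sym.
have [exw|nxw] := eqVneq x w.
  by subst x; rewrite (paired_fun pxy pw) !eqxx ?nww' ?nw'w.
have [exw'|nxw'] := eqVneq x w'.
  by subst x; rewrite (paired_fun pxy (paired_sym pw)) !eqxx ?nww' ?nw'w.
have [eyw|nyw] := eqVneq y w.
  by rewrite eyw in pyx; case/eqP: nxw'; exact: paired_fun pyx pw.
have [eyw'|nyw'] := eqVneq y w'.
  by rewrite eyw' in pyx; case/eqP: nxw; exact: paired_fun pyx (paired_sym pw).
by [].
Qed.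

Section Family.
Variables (I : finType) (en : I -> bool -> T).

Definition mult (i : I) (x : T) : nat := (en i true == x) + (en i false == x).

Definition load (g : I -> nat) (x : T) : nat := \sum_i mult i x * g i.

Definition balanced (g : I -> nat) : Prop :=
  forall x y, paired x y -> load g x = load g y.

Definition atom (g : I -> nat) : Prop :=
  [/\ balanced g, exists i, 0 < g i &
      forall h, balanced h -> (forall i, h i <= g i) ->
        (forall i, h i = 0) \/ (forall i, h i = g i)].

Definition delta (i : I) (k : I) : nat := k == i.

Lemma mult_end i b x : mult i x = (en i b == x) + (en i (~~ b) == x).
Proof. by case: b; rewrite // addnC. Qed.

Lemma load_ext g1 g2 x : (forall i, g1 i = g2 i) -> load g1 x = load g2 x.
Proof. by move=> e; apply: eq_bigr => i _; rewrite e. Qed.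

Lemma load_add g1 g2 x : load (fun i => g1 i + g2 i) x = load g1 x + load g2 x.
Proof. by rewrite -big_split; apply: eq_bigr => i _; rewrite mulnDr. Qed.

Lemma load_delta i x : load (delta i) x = mult i x.
Proof. exact: sum_mul_eq. Qed.

Lemma load_supported h x c : (forall i, 0 < h i -> mult i x = c) ->
  load h x = c * \sum_i h i.
Proof.
move=> supp; rewrite big_distrr /=; apply: eq_bigr => i _.
by have [->|/supp ->] := posnP (h i); rewrite ?muln0.
Qed.

Lemma load_end_ge g i b : g i <= load g (en i b).
Proof.
rewrite /load (bigD1 i) //= (mult_end i b) eqxx.
by apply: leq_trans (leq_addr _ _); rewrite add1n leq_pmull.
Qed.

Lemma load_pos g x : 0 < load g x -> exists i b, en i b = x /\ 0 < g i.
Proof.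
move=> pos; have /existsP[i] : [exists i, 0 < mult i x * g i].
  apply: contraLR pos; rewrite negb_exists => /forallP zero.
  by rewrite -leqNgt leqn0 sum_nat_eq0; apply/forallP => i; rewrite -leqn0 leqNgt zero.
rewrite muln_gt0 /mult => /andP[ends gi].
by case: (en i true =P x) ends => [e|_]; [|case: (en i false =P x) => e];
  [exists i, true | exists i, false | ].
Qed.

Lemma mult_le2 i x : mult i x <= 2.
Proof. by rewrite /mult; case: (_ == x); case: (_ == x). Qed.

Lemma mult_add_le2 i x y : x != y -> mult i x + mult i y <= 2.
Proof.
move=> nxy; have end_le1 (t : T) : (t == x) + (t == y) <= 1.
  by case: (eqVneq t x) => [->|_]; [rewrite (negbTE nxy) | case: (t == y)].
by have := end_le1 (en i true); have := end_le1 (en i false); rewrite /mult; lia.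
Qed.

Lemma atom_delta_load_le2 g i :
  atom g -> 0 < g i -> balanced (delta i) -> forall x, load g x <= 2.
Proof.
case=> _ _ min_g gi bal x.
have le_g k : delta i k <= g k by rewrite /delta; case: eqP => [->|].
case: (min_g _ bal le_g) => [/(_ i)|eq_g]; first by rewrite /delta eqxx.
by rewrite -(load_ext x eq_g) load_delta mult_le2.
Qed.

Lemma loop_delta_balanced i b b' :
  paired (en i b) (en i b') -> balanced (delta i).
Proof.
move=> p x y pxy; rewrite !load_delta.
have eb' : b' = ~~ b by case: b b' p => [] [] // /paired_irrefl.
by rewrite eb' in p; rewrite !(mult_end i b); exact: paired_count.
Qed.

Lemma unpaired_delta_balanced i :
  (forall b w, ~ paired (en i b) w) -> balanced (delta i).
Proof.
move=> unp x y pxy; rewrite !load_delta /mult.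
have off b z w : paired z w -> (en i b == z) = false.
  by move=> pz; apply/eqP => ez; apply: (unp b w); rewrite ez.
by rewrite !(off _ _ _ pxy) !(off _ _ _ (paired_sym pxy)).
Qed.

Definition pure_weight g x y c : nat :=
  \sum_i ((mult i x == c) && (mult i y == 0)) * g i.

Lemma load_pure g x y : x != y -> (forall i, 0 < g i -> mult i x != mult i y) ->
  load g x = pure_weight g x y 1 + 2 * pure_weight g x y 2.
Proof.
move=> nxy unbal; rewrite /pure_weight big_distrr -big_split; apply: eq_bigr => i _ /=.
have [->|gi] := posnP (g i); first by rewrite !muln0.
have := unbal i gi; have := mult_add_le2 i nxy.
by case: (mult i x) => [|[|[|?]]]; case: (mult i y) => [|[|[|?]]] //= _ _; lia.
Qed.

Lemma balanced_sub u g : balanced u -> balanced g -> (forall i, g i <= u i) ->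
  balanced (fun i => u i - g i).
Proof.
move=> bal_u bal_g le_g x y pxy.
have split z : load (fun i => u i - g i) z + load g z = load u z.
  by rewrite -load_add; apply: load_ext => i; rewrite subnK.
by have := split x; have := split y; rewrite (bal_u _ _ pxy) (bal_g _ _ pxy); lia.
Qed.

Lemma exists_atom_le h : balanced h -> (exists i, 0 < h i) ->
  exists2 g, atom g & forall i, g i <= h i.
Proof.
have [n] := ubnP (\sum_i h i); elim: n h => // n IH h lt_n bal pos.
have [|not_atom] := classic (atom h); first by exists h.
have [h' [bal' le' [i pos'] [j lt']]] : exists h', [/\ balanced h',
    forall i, h' i <= h i, exists i, 0 < h' i & exists j, h' j < h j].
  apply: NNPP => none; apply: not_atom; split=> // h' bal' le'.
  apply: NNPP => /not_or_and[/not_all_ex_not[i nz] /not_all_ex_not[j ne]].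
  apply: none; exists h'; split=> //; first by exists i; rewrite lt0n; exact/eqP.
  by exists j; rewrite ltn_neqAle le' andbT; exact/eqP.
have lt_sum : \sum_k h' k < \sum_k h k.
  rewrite [X in _ < X](bigD1 j) // [X in X < _](bigD1 j) //= -addSn.
  by rewrite leq_add // leq_sum // => k _; exact: le'.
have [|g atom_g le_g] := IH h' _ bal' (ex_intro _ i pos'); first by lia.
by exists g => // k; exact: leq_trans (le_g k) (le' k).
Qed.

Lemma balanced_atom_decomposition u : balanced u ->
  exists gs : seq (I -> nat),
    (forall g, List.In g gs -> atom g) /\ forall i, u i = \sum_(g <- gs) g i.
Proof.
have [n] := ubnP (\sum_i u i); elim: n u => // n IH u lt_n bal.
have [[i pos]|zero] := classic (exists i, 0 < u i); last first.
  exists [::]; split=> // i; rewrite big_nil; apply/eqP; rewrite -leqn0 leqNgt.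
  by apply/negP => pos; apply: zero; exists i.
have [g atom_g le_g] := exists_atom_le bal (ex_intro _ i pos).
have [bal_g [j gj] _] := atom_g.
have [|gs [atoms sum_gs]] := IH _ _ (balanced_sub bal bal_g le_g).
  have : \sum_k (u k - g k) + \sum_k g k = \sum_k u k.
    by rewrite -big_split; apply: eq_bigr => k _; rewrite /= subnK // le_g.
  have : g j <= \sum_k g k by rewrite (bigD1 j) //= leq_addr.
  lia.
exists (g :: gs); split; first by move=> g' [<-|/atoms].
by move=> k; rewrite big_cons -sum_gs subnKC.
Qed.

End Family.

Section Contraction.
Variables (I : finType) (en : I -> bool -> T) (i j : I) (bi bj : bool).
Hypothesis nij : i != j.

Definition join_ends (o : option I) (b : bool) : T :=
  if o is Some k then en k b else if b then en i (~~ bi) else en j (~~ bj).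

Definition join_weight (g : I -> nat) (o : option I) : nat :=
  if o is Some k then g k - (k == i) - (k == j) else 1.

Definition split_weight (h : option I -> nat) (k : I) : nat :=
  h (Some k) + ((k == i) + (k == j)) * h None.

Lemma sum_mul_join (F : I -> nat) g : 0 < g i -> 0 < g j ->
  \sum_k F k * g k = \sum_k F k * (g k - (k == i) - (k == j)) + F i + F j.
Proof.
move=> gi gj; rewrite -(sum_mul_eq F i) -(sum_mul_eq F j) -!big_split /=.
apply: eq_bigr => k _; rewrite -!mulnDr; congr (_ * _).
have [->|_] := eqVneq k i; first by rewrite (negbTE nij); lia.
by have [->|_] := eqVneq k j; lia.
Qed.

Lemma sum_join_weight g : 0 < g i -> 0 < g j -> \sum_o join_weight g o < \sum_k g k.
Proof.
move=> gi gj; rewrite sum_option /=.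
have := sum_mul_join (fun=> 1) gi gj.
by under eq_bigr do rewrite mul1n; under [in X in _ = X -> _]eq_bigr do rewrite mul1n; lia.
Qed.

Lemma load_join g x : 0 < g i -> 0 < g j ->
  load join_ends (join_weight g) x + ((en i bi == x) + (en j bj == x)) = load en g x.
Proof.
move=> gi gj; rewrite /load sum_option (sum_mul_join _ gi gj).
by rewrite (mult_end en i bi) (mult_end en j bj) /mult /=; lia.
Qed.

Lemma load_split h x :
  load en (split_weight h) x = load join_ends h x + h None * ((en i bi == x) + (en j bj == x)).
Proof.
rewrite /load sum_option /split_weight.
under eq_bigr do rewrite mulnDr mulnA mulnDr.
rewrite !big_split /= -!big_distrl /= big_split /= !sum_mul_eq.
by rewrite (mult_end en i bi) (mult_end en j bj) /mult /=; lia.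
Qed.

Hypothesis pij : paired (en i bi) (en j bj).

Lemma atom_join g : atom en g -> 0 < g i -> 0 < g j -> atom join_ends (join_weight g).
Proof.
case=> bal_g _ min_g gi gj; split.
- move=> x y pxy; have := load_join x gi gj; have := load_join y gi gj.
  by rewrite (paired_count pij pxy) (bal_g _ _ pxy); lia.
- by exists None.
move=> h bal_h le_h.
have bal_split : balanced en (split_weight h).
  by move=> x y pxy; rewrite !load_split (bal_h _ _ pxy) (paired_count pij pxy).
have le_split k : split_weight h k <= g k.
  have := le_h (Some k); have := le_h None; rewrite /split_weight /=.
  have [->|_] := eqVneq k i; first by rewrite (negbTE nij); lia.
  by have [->|_] := eqVneq k j; lia.
case: (min_g _ bal_split le_split) => [zero|full]; [left|right].
  case=> [k|]; first by have := zero k; rewrite /split_weight; lia.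
  by have := zero i; rewrite /split_weight eqxx; lia.
have hN : h None = 1.
  have := le_h None; have := full i; have := le_h (Some i).
  by rewrite /split_weight /= eqxx (negbTE nij); lia.
case=> [k|//] /=; have := full k; rewrite /split_weight hN.
have [->|_] := eqVneq k i; first by rewrite (negbTE nij); lia.
by have [->|_] := eqVneq k j; lia.
Qed.

End Contraction.

Section Concentrated.
Variables (I : finType) (en : I -> bool -> T) (g : I -> nat) (z z' : T).
Hypotheses (atom_g : atom en g) (pzz' : paired z z').
Hypothesis paired_ends :
  forall i b w, 0 < g i -> paired (en i b) w -> en i b = z \/ en i b = z'.

Lemma concentrated_balanced h : (forall i, h i <= g i) ->
  load en h z = load en h z' -> balanced en h.
Proof.
move=> le_h hzz' x y pxy.
have zero w t : paired w t -> w != z -> w != z' -> load en h w = 0.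
  move=> pwt nwz nwz'; rewrite /load big1 // => i _.
  have [->|hi] := posnP (h i); first by rewrite muln0.
  suff off b : (en i b == w) = false by rewrite /mult !off.
  apply/eqP => ew; rewrite -ew in pwt nwz nwz'.
  by case: (paired_ends (leq_trans hi (le_h i)) pwt) => e; rewrite e eqxx in nwz nwz'.
have [exz|nxz] := eqVneq x z.
  by subst x; rewrite -(paired_fun pzz' pxy).
have [exz'|nxz'] := eqVneq x z'.
  by subst x; rewrite -(paired_fun (paired_sym pzz') pxy).
have pyx := paired_sym pxy.
have nyz : y != z.
  by apply: contra_neq nxz' => eyz; rewrite eyz in pyx; exact: paired_fun pyx pzz'.
have nyz' : y != z'.
  by apply: contra_neq nxz => eyz'; rewrite eyz' in pyx; exact: paired_fun pyx (paired_sym pzz').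
by rewrite (zero _ _ pxy) // (zero _ _ pyx).
Qed.

Lemma pure_exchange c1 c2 t1 t2 : 0 < c1 -> 0 < t1 -> c1 * t1 = c2 * t2 ->
  c1 * t1 < load en g z ->
  t1 <= pure_weight en g z z' c1 -> t2 <= pure_weight en g z' z c2 -> False.
Proof.
move=> c1_gt0 t1_gt0 balance lt_load le1 le2.
have [h1 [le_h1 supp1 sum1]] := exists_subweight le1.
have [h2 [le_h2 supp2 sum2]] := exists_subweight le2.
have m1z i : 0 < h1 i -> mult en i z = c1 by move/supp1 => /andP[/eqP].
have m1z' i : 0 < h1 i -> mult en i z' = 0 by move/supp1 => /andP[_ /eqP].
have m2z i : 0 < h2 i -> mult en i z = 0 by move/supp2 => /andP[_ /eqP].
have m2z' i : 0 < h2 i -> mult en i z' = c2 by move/supp2 => /andP[/eqP].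
have disjoint i : h1 i = 0 \/ h2 i = 0.
  have [|p1] := posnP (h1 i); [by left | right].
  have [//|p2] := posnP (h2 i); by have := m1z i p1; rewrite m2z //; lia.
pose h i := h1 i + h2 i.
have le_h i : h i <= g i by case: (disjoint i) => e; rewrite /h e ?addn0 ?add0n ?le_h1 ?le_h2.
have load_z : load en h z = c1 * t1.
  by rewrite load_add (load_supported m1z) (load_supported m2z) sum1 mul0n addn0.
have load_z' : load en h z' = c2 * t2.
  by rewrite load_add (load_supported m1z') (load_supported m2z') sum2 mul0n.
have bal_h := concentrated_balanced le_h (etrans load_z (etrans balance (esym load_z'))).
have [_ _ min_g] := atom_g.
case: (min_g h bal_h le_h) => [zero|full].
  have : \sum_i h1 i = 0 by rewrite big1 // => i _; have := zero i; rewrite /h; lia.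
  by rewrite sum1 => t1_0; rewrite t1_0 in t1_gt0.
by move: lt_load; rewrite -(load_ext _ z full) load_z ltnn.
Qed.

Lemma concentrated_load_le2 : load en g z <= 2.
Proof.
have nzz' : z != z' by apply/eqP => e; move: pzz'; rewrite e; exact: paired_irrefl.
have [[i [gi eq_i]]|unbal] := classic (exists i, 0 < g i /\ mult en i z = mult en i z').
  apply: (atom_delta_load_le2 atom_g gi); apply: concentrated_balanced.
    by move=> k; rewrite /delta; case: eqP => [->|].
  by rewrite !load_delta.
have unbal_z i : 0 < g i -> mult en i z != mult en i z'.
  by move=> gi; apply/eqP => e; apply: unbal; exists i.
have unbal_z' i : 0 < g i -> mult en i z' != mult en i z.
  by rewrite eq_sym; exact: unbal_z.
have load_z := load_pure nzz' unbal_z.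
have nz'z : z' != z by rewrite eq_sym.
have load_z' := load_pure nz'z unbal_z'.
have [bal_g _ _] := atom_g; have balance := bal_g _ _ pzz'.
rewrite load_z load_z' in balance; rewrite leqNgt; apply/negP => gt2.
set X1 := pure_weight en g z z' 1 in balance load_z gt2.
set X2 := pure_weight en g z z' 2 in balance load_z gt2.
set Y1 := pure_weight en g z' z 1 in balance.
set Y2 := pure_weight en g z' z 2 in balance.
(* From [X1 + 2 X2 = Y1 + 2 Y2 >= 3] one of these exchanges always exists. *)
case: (boolP ((0 < X1) && (0 < Y1))) => [/andP[p q]|n1].
  by apply: (@pure_exchange 1 1 1 1); lia.
case: (boolP ((0 < X2) && (0 < Y2))) => [/andP[p q]|n2].
  by apply: (@pure_exchange 2 2 1 1); lia.
case: (boolP ((1 < X1) && (0 < Y2))) => [/andP[p q]|n3].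
  by apply: (@pure_exchange 1 2 2 1); lia.
case: (boolP ((0 < X2) && (1 < Y1))) => [/andP[p q]|n4].
  by apply: (@pure_exchange 2 1 1 2); lia.
lia.
Qed.

End Concentrated.

Theorem atom_load_le2 (I : finType) (en : I -> bool -> T) g :
  atom en g -> forall x, load en g x <= 2.
Proof.
move=> atom_g x; have [n] := ubnP (\sum_i g i).
elim: n I en g atom_g => // n IH I en g atom_g lt_n.
have [bal_g [i0 gi0] _] := atom_g.
have [[i [b [w [gi piw niz nwz]]]]|free] := classic (exists i b w,
    [/\ 0 < g i, paired (en i b) w, en i b != x & w != x]).
  have [j [b' [ejw gj]]] : exists j b', en j b' = w /\ 0 < g j.
    by apply: load_pos; rewrite -(bal_g _ _ piw); apply: leq_trans gi _; exact: load_end_ge.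
  subst w; have [eij|nij] := eqVneq i j.
    by subst j; apply: (atom_delta_load_le2 atom_g gi (loop_delta_balanced piw)).
  rewrite -(load_join en b b' nij x gi gj) (negbTE niz) (negbTE nwz) addn0.
  apply: IH (atom_join nij piw atom_g gi gj) _.
  by have := sum_join_weight nij gi gj; lia.
have at_x i b w : 0 < g i -> paired (en i b) w -> en i b = x \/ w = x.
  move=> gi pw; apply: NNPP => /not_or_and[/eqP niz /eqP nwz].
  by apply: free; exists i, b, w.
have [[x' pxx']|unpaired_x] := classic (exists x', paired x x').
  apply: (concentrated_load_le2 atom_g pxx') => i b w gi pw.
  case: (at_x i b w gi pw) => [|ew]; [by left | right].
  by rewrite ew in pw; exact: paired_fun (paired_sym pw) pxx'.
apply: (atom_delta_load_le2 atom_g gi0); apply: unpaired_delta_balanced => b w pw.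
case: (at_x i0 b w gi0 pw) => e; apply: unpaired_x; first by exists w; rewrite -e.
by exists (en i0 b); rewrite -e; exact: paired_sym.
Qed.

End Balanced.

(** * Graphs of maximal degree two *)

Section MaxDegreeTwo.
Variables (T : eqType) (e : rel T).
Hypothesis e_sym : symmetric e.
Hypothesis e_deg2 : forall v w1 w2 w3, e v w1 -> e v w2 -> e v w3 ->
  w1 = w2 \/ w1 = w3 \/ w2 = w3.

Definition connected x y := exists p, path e x p && (last x p == y).
Definition leaf d := exists w, e d w /\ forall w', e d w' -> w' = w.

Lemma connected_sym x y : connected x y -> connected y x.
Proof.
move=> [p /andP[px /eqP ly]]; exists (rev (belast x p)); apply/andP; split.
  by rewrite -ly rev_path; apply: sub_path px => a b; rewrite /= e_sym.
by case: p px ly => [|z p] _ ly /=; rewrite -?ly // rev_cons last_rcons.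
Qed.

Lemma uniq_path_prefix p : forall u x q, e u x -> path e x p -> path e x q ->
  uniq (u :: x :: p) -> uniq (u :: x :: q) ->
  (exists s, q = p ++ s) \/ (exists s, p = q ++ s).
Proof.
elim: p => [|y p IH] u x q eux px qx up uq; first by left; exists q.
case: q qx uq => [|y' q] qx uq; first by right; exists (y :: p).
move: px qx => /= /andP[exy px] /andP[exy' qx].
have nyu : y != u by move: up; rewrite /= !inE => /andP[/norP[_ /norP[]]]; rewrite eq_sym.
have ny'u : y' != u by move: uq; rewrite /= !inE => /andP[/norP[_ /norP[]]]; rewrite eq_sym.
have exu : e x u by rewrite e_sym.
have eyy' : y = y'.
  case: (e_deg2 exu exy exy') => [eyu|[ey'u|//]]; first by rewrite eyu eqxx in nyu.
  by rewrite ey'u eqxx in ny'u.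
subst y'; case/andP: up => _ up; case/andP: uq => _ uq.
by case: (IH x y q exy px qx up uq) => [[s ->]|[s ->]]; [left|right]; exists s.
Qed.

Lemma leaf_path_end d d1 p s : leaf d1 -> p != [::] -> path e d (p ++ s) ->
  uniq (d :: p ++ s) -> last d p = d1 -> s = [::].
Proof.
move=> [w [_ only_w]] np pps ups ld.
case: s pps ups => [//|z s] pps ups; exfalso.
case/lastP: p np pps ups ld => [//|q y] _ pps ups; rewrite last_rcons => eyd; subst y.
move: pps; rewrite cat_path rcons_path last_rcons => /andP[/andP[_ eqd] /= /andP[ez _]].
have wq := only_w _ (etrans (e_sym _ _) eqd); have wz := only_w _ ez.
move: ups; rewrite -cat_cons cat_uniq => /and3P[_ /hasP[]] //.
exists z; first by rewrite inE eqxx.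
have := mem_last d q; rewrite /= !inE mem_rcons inE wz -wq => /orP[->//|->].
by rewrite !orbT.
Qed.

Lemma leaf_partner_uniq d d1 d2 : leaf d -> leaf d1 -> leaf d2 ->
  d != d1 -> d != d2 -> connected d d1 -> connected d d2 -> d1 = d2.
Proof.
move=> [w [_ only_w]] leaf1 leaf2 nd1 nd2 [p1 /andP[pp1 /eqP l1]] [p2 /andP[pp2 /eqP l2]].
case: (shortenP pp1) l1 => q1 pq1 uq1 _ l1; case: (shortenP pp2) l2 => q2 pq2 uq2 _ l2.
case: q1 pq1 uq1 l1 => [|y1 q1] pq1 uq1 l1; first by rewrite -l1 eqxx in nd1.
case: q2 pq2 uq2 l2 => [|y2 q2] pq2 uq2 l2; first by rewrite -l2 eqxx in nd2.
move: (pq1) (pq2) => /= /andP[e1 pq1'] /andP[e2 pq2'].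
have ey1 := only_w _ e1; have ey2 := only_w _ e2; subst y1 y2.
case: (uniq_path_prefix e1 pq1' pq2' uq1 uq2) => [[s eq2]|[s eq1]].
  rewrite eq2 -cat_cons in pq2 uq2 l2.
  have s0 := leaf_path_end leaf1 (isT : w :: q1 != [::]) pq2 uq2 l1.
  by move: l2; rewrite s0 cats0 l1.
rewrite eq1 -cat_cons in pq1 uq1 l1.
have s0 := leaf_path_end leaf2 (isT : w :: q2 != [::]) pq1 uq1 l2.
by move: l1; rewrite s0 cats0 l2.
Qed.

End MaxDegreeTwo.

(** * The partition equivalence graph *)

Section ColoredQuiver.
Variables (V A S : finType) (src tgt : A -> V) (col : A -> S).
Hypotheses (acyc : acyclic src tgt) (cpaths : color_paths src tgt col).

Lemma qpath_suffix p a q : qpath src tgt (p ++ a :: q) ->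
  path (fun b c => tgt b == src c) a q.
Proof. by case: p => [//|b p] /=; rewrite cat_path => /andP[_ /andP[]]. Qed.

Lemma path_src_neq a p b q : path (fun b c => tgt b == src c) a (p ++ b :: q) ->
  src a != src b.
Proof. by rewrite cat_path => /andP[pa /= /andP[/eqP <- _]]; exact: acyc pa. Qed.

Lemma path_tgt_neq a p b q : path (fun b c => tgt b == src c) a (p ++ b :: q) ->
  tgt a != tgt b.
Proof.
case: p => [|c p] /=; first by case/andP => /eqP -> _; exact: (acyc (p := [::])).
case/andP => /eqP ->; rewrite cat_path => /andP[pc /= /andP[lb _]].
have : qpath src tgt (c :: rcons p b) by rewrite /= rcons_path pc lb.
by move/acyc; rewrite last_rcons.
Qed.

Lemma same_color_eq (f : A -> V) a1 a2 :
  (forall a p b q, path (fun b c => tgt b == src c) a (p ++ b :: q) -> f a != f b) ->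
  f a1 = f a2 -> col a1 = col a2 -> a1 = a2.
Proof.
move=> f_neq ef ec; have [p /and3P[qp _ /forallP inp]] := cpaths (col a1).
have i1 : a1 \in p by rewrite (eqP (inp a1)).
have i2 : a2 \in p by rewrite (eqP (inp a2)) ec.
have [//|n12] := eqVneq a1 a2.
case: (splitPr i1) qp i2 => p1 p2 qp.
rewrite mem_cat inE eq_sym (negbTE n12) /= => /orP[] i2.
  case: (splitPr i2) qp => q1 q2; rewrite -catA /= => /qpath_suffix /f_neq.
  by rewrite ef eqxx.
case: (splitPr i2) qp => q1 q2 /qpath_suffix /f_neq.
by rewrite ef eqxx.
Qed.

Lemma src_col_inj a1 a2 : src a1 = src a2 -> col a1 = col a2 -> a1 = a2.
Proof. exact/same_color_eq/path_src_neq. Qed.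

Lemma tgt_col_inj a1 a2 : tgt a1 = tgt a2 -> col a1 = col a2 -> a1 = a2.
Proof. exact/same_color_eq/path_tgt_neq. Qed.

Lemma oarr_src a : oarr src col (src a) (col a) = Some a.
Proof.
rewrite /oarr; case: pickP => [a' /andP[/eqP e1 /eqP e2]|none].
  by rewrite (src_col_inj e1 e2).
by have := none a; rewrite !eqxx.
Qed.

Lemma iarr_tgt a : iarr tgt col (tgt a) (col a) = Some a.
Proof.
rewrite /iarr; case: pickP => [a' /andP[/eqP e1 /eqP e2]|none].
  by rewrite (tgt_col_inj e1 e2).
by have := none a; rewrite !eqxx.
Qed.

Lemma inX_src a : inX src tgt col (src a) (col a).
Proof. by apply/existsP; exists a; rewrite !eqxx orbT. Qed.

Lemma inX_tgt a : inX src tgt col (tgt a) (col a).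
Proof. by apply/existsP; exists a; rewrite !eqxx. Qed.

Section PartitionGraph.
Variables (beta : V -> nat) (r : A -> nat).
Hypothesis r_ok : rank_ok src tgt col beta r.

Local Notation pedge := (pedge src tgt col beta r).

Lemma rank_le_tgt a : r a <= beta (tgt a).
Proof. by have := r_ok (inX_tgt a); rewrite iarr_tgt /=; lia. Qed.

Definition coupling_nbr (v w : V * S * nat) : Prop :=
  let: (x, s, i) := v in exists s', [/\ w = (x, s', beta x - i), s' != s,
    inX src tgt col x s', inX src tgt col x s & coupled src tgt col x].

Definition out_nbr (v w : V * S * nat) : Prop :=
  let: (x, s, i) := v in exists a, [/\ src a = x, col a = s, 1 <= i, i <= r a - 1 &
    w = (tgt a, s, beta (tgt a) - i)].

Definition in_nbr (v w : V * S * nat) : Prop :=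
  let: (x, s, i) := v in exists a, [/\ tgt a = x, col a = s, 1 <= beta x - i,
    beta x - i <= r a - 1 & w = (src a, s, beta x - i)].

Lemma pedge_nbr v w : pedge v w -> [\/ coupling_nbr v w, out_nbr v w | in_nbr v w].
Proof.
case: v => [[x s] i]; case: w => [[y s'] j].
rewrite /Defs.pedge /edge0 => /orP[/orP[|]|/orP[|]].
- case/andP => /eqP <- /andP[ns /andP[cx /and5P[ix ix' _ _ /eqP ->]]].
  by apply: Or31; exists s'; split; rewrite // eq_sym.
- case/existsP => a /andP[/eqP ca /andP[/eqP -> /and5P[/eqP sa /eqP ta i1 i2 /eqP ->]]].
  by apply: Or32; exists a; split; rewrite // ta.
- case/andP => /eqP -> /andP[ns /andP[cx /and5P[ix ix' i1 i2 /eqP ei]]].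
  by apply: Or31; exists s'; split => //; congr (_, _, _); lia.
- case/existsP => a /andP[/eqP ca /andP[/eqP ss /and5P[/eqP sa /eqP ta i1 i2 /eqP ei]]].
  have := rank_le_tgt a; rewrite ta => ra.
  apply: Or33; exists a; split; rewrite ?ca ?ss //; try lia.
  by rewrite sa; congr (_, _, _); lia.
Qed.

Lemma coupling_nbr_uniq v w w' : coupling_nbr v w -> coupling_nbr v w' -> w = w'.
Proof.
case: v => [[x s] i] [s1 [-> n1 i1 ix /eqP cx]] [s2 [-> n2 i2 _ _]].
congr (_, _, _); apply/eqP; apply: contraT => n12.
suff : 2 < #|[pred s | inX src tgt col x s]| by rewrite -/(npairs _ _ _ x) cx.
rewrite (cardD1 s) (cardD1 s1) (cardD1 s2) !inE ix i1 i2 n1 n2 eq_sym n12.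
by rewrite addnA leq_addr.
Qed.

Lemma out_nbr_uniq v w w' : out_nbr v w -> out_nbr v w' -> w = w'.
Proof.
case: v => [[x s] i] [a1 [e1 c1 _ _ ->]] [a2 [e2 c2 _ _ ->]].
by rewrite (src_col_inj (etrans e1 (esym e2)) (etrans c1 (esym c2))).
Qed.

Lemma in_nbr_uniq v w w' : in_nbr v w -> in_nbr v w' -> w = w'.
Proof.
case: v => [[x s] i] [a1 [e1 c1 _ _ ->]] [a2 [e2 c2 _ _ ->]].
by rewrite (tgt_col_inj (etrans e1 (esym e2)) (etrans c1 (esym c2))).
Qed.

(* [r (i(x,s)) + r (o(x,s)) <= beta x] leaves no room for both neighbours. *)
Lemma out_in_nbr_excl v w w' : out_nbr v w -> in_nbr v w' -> False.
Proof.
case: v => [[x s] i] [a [sa ca ? ? _]] [b [tb cb ? ? _]].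
have := r_ok (inX_src a); rewrite oarr_src sa ca -tb -cb iarr_tgt /= tb; lia.
Qed.

Lemma pedge_deg2 v w1 w2 w3 : pedge v w1 -> pedge v w2 -> pedge v w3 ->
  w1 = w2 \/ w1 = w3 \/ w2 = w3.
Proof.
move=> /pedge_nbr[] k1 /pedge_nbr[] k2 /pedge_nbr[] k3;
  first [ by left; eauto using coupling_nbr_uniq, out_nbr_uniq, in_nbr_uniq
        | by right; left; eauto using coupling_nbr_uniq, out_nbr_uniq, in_nbr_uniq
        | by right; right; eauto using coupling_nbr_uniq, out_nbr_uniq, in_nbr_uniq
        | by exfalso; eauto using out_in_nbr_excl ].
Qed.

Local Notation end_point := ((V * S * nat) + (A * bool))%type.

(* Ends at lonely vertices, where [phi] vanishes, go to private points [inr]. *)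
Definition quiver_ends (a : A) (b : bool) : end_point :=
  if b then
    if lonely src tgt col (src a) then inr (a, true) else inl (src a, col a, r a)
  else
    if lonely src tgt col (tgt a) then inr (a, false)
    else inl (tgt a, col a, beta (tgt a) - r a).

Lemma inl_eqE (v w : V * S * nat) : (inl v == inl w :> end_point) = (v == w).
Proof. by apply/eqP/eqP => [[]|->]. Qed.

Lemma triple_eqE (x y : V) (s t : S) (i j : nat) :
  ((x, s, i) == (y, t, j)) = [&& x == y, s == t & i == j].
Proof. by rewrite !xpair_eqE andbA. Qed.

Lemma sum_src_ends g x s i :
  \sum_a (quiver_ends a true == inl (x, s, i)) * g a =
  if lonely src tgt col x then 0
  else (i == ov r (oarr src col x s)) * ov g (oarr src col x s).
Proof.
rewrite /oarr; case: pickP => [a0 /andP[/eqP sx /eqP cs]|none] /=.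
  rewrite (bigD1 a0) //= big1 => [|a na].
    rewrite addn0 /quiver_ends sx cs; case: (lonely _ _ _ x) => //=.
    by rewrite inl_eqE triple_eqE !eqxx eq_sym.
  rewrite /quiver_ends; case: (lonely _ _ _ (src a)); rewrite ?inl_eqE ?triple_eqE //=.
  have [e|//] := eqVneq (src a) x; have [e'|] := eqVneq (col a) s; last by rewrite andbF.
  by rewrite (src_col_inj (etrans e (esym sx)) (etrans e' (esym cs))) eqxx in na.
rewrite big1 => [|a _]; first by case: (lonely _ _ _ x); rewrite ?muln0.
rewrite /quiver_ends; case: (lonely _ _ _ (src a)); rewrite ?inl_eqE ?triple_eqE //=.
by have /= := none a; rewrite andbA => ->.
Qed.

Lemma sum_tgt_ends g x s i :
  \sum_a (quiver_ends a false == inl (x, s, i)) * g a =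
  if lonely src tgt col x then 0
  else (i == beta x - ov r (iarr tgt col x s)) * ov g (iarr tgt col x s).
Proof.
rewrite /iarr; case: pickP => [a0 /andP[/eqP tx /eqP cs]|none] /=.
  rewrite (bigD1 a0) //= big1 => [|a na].
    rewrite addn0 /quiver_ends tx cs; case: (lonely _ _ _ x) => //=.
    by rewrite inl_eqE triple_eqE !eqxx eq_sym.
  rewrite /quiver_ends; case: (lonely _ _ _ (tgt a)); rewrite ?inl_eqE ?triple_eqE //=.
  have [e|//] := eqVneq (tgt a) x; have [e'|] := eqVneq (col a) s; last by rewrite andbF.
  by rewrite (tgt_col_inj (etrans e (esym tx)) (etrans e' (esym cs))) eqxx in na.
rewrite big1 => [|a _]; first by case: (lonely _ _ _ x); rewrite ?muln0.
rewrite /quiver_ends; case: (lonely _ _ _ (tgt a)); rewrite ?inl_eqE ?triple_eqE //=.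
by have /= := none a; rewrite andbA => ->.
Qed.

Lemma phi_load g v : phi src tgt col beta r g v = load quiver_ends g (inl v).
Proof.
case: v => [[x s] i]; rewrite /load /mult.
under eq_bigr do rewrite mulnDl; rewrite big_split /= sum_src_ends sum_tgt_ends.
by rewrite /phi; case: (lonely _ _ _ x).
Qed.

Lemma pedge_sym : symmetric pedge.
Proof. by move=> v w; rewrite /Defs.pedge orbC. Qed.

Local Notation theta := (theta_rel src tgt col beta r).

Lemma theta_uniq e e1 e2 : theta e e1 -> theta e e2 -> e1 = e2.
Proof.
move=> [[_ leaf_e] [[_ leaf1] [n1 c1]]] [_ [[_ leaf2] [n2 c2]]].
exact: (leaf_partner_uniq pedge_sym pedge_deg2 leaf_e leaf1 leaf2 n1 n2 c1 c2).
Qed.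

Lemma theta_sym e e' : theta e e' -> theta e' e.
Proof.
move=> [end_e [end_e' [ne c]]]; do 2!split=> //; split; first by rewrite eq_sym.
exact: (connected_sym pedge_sym c).
Qed.

Definition theta_paired (x y : end_point) : Prop :=
  if (x, y) is (inl e, inl e') then theta e e' else False.

Lemma theta_paired_sym x y : theta_paired x y -> theta_paired y x.
Proof. by case: x y => [e|?] [e'|?] //; exact: theta_sym. Qed.

Lemma theta_paired_irrefl x : ~ theta_paired x x.
Proof. by case: x => [e [_ [_ [/eqP ne _]]]|b []]; apply: ne. Qed.

Lemma theta_paired_fun x y y' : theta_paired x y -> theta_paired x y' -> y = y'.
Proof. by case: x y y' => [e|?] [e1|?] [e2|?] //= t1 t2; rewrite (theta_uniq t1 t2). Qed.

Lemma inU_balanced u :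
  inU src tgt col beta r u <-> balanced theta_paired quiver_ends u.
Proof.
split=> [inU_u [e|?] [e'|?] //= t|bal e e' t]; first by rewrite -!phi_load; exact: inU_u.
by rewrite !phi_load; exact: bal.
Qed.

End PartitionGraph.

End ColoredQuiver.

Theorem corollary9p1 (V A S : finType) (src tgt : A -> V) (col : A -> S)
    (beta : V -> nat) (r : A -> nat) :
  acyclic src tgt ->
  color_paths src tgt col ->
  gentle src tgt col ->
  max_rank src tgt col beta r ->
  forall u : A -> nat, inU src tgt col beta r u ->
  exists gs : seq (A -> nat),
    (forall g, List.In g gs ->
       inU src tgt col beta r g /\
       (forall e, endpoint src tgt col beta r e -> phi src tgt col beta r g e <= 2)) /\
    (forall a, u a = \sum_(g <- gs) g a).
Proof.
move=> acyc cpaths _ [r_ok _] u /(inU_balanced acyc cpaths) bal_u.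
have [gs [atoms sum_gs]] := balanced_atom_decomposition bal_u.
exists gs; split=> // g /atoms atom_g; split.
  by apply/(inU_balanced acyc cpaths); case: atom_g.
move=> e _; rewrite (phi_load acyc cpaths).
apply: (atom_load_le2 _ _ (@theta_paired_fun _ _ _ _ _ _ acyc cpaths _ _ r_ok) atom_g).
  exact: theta_paired_sym.
exact: theta_paired_irrefl.
Qed.
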